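(* Let $A, E \in \mathbb{R}^{m\times n}$, $b, \epsilon \in \mathbb{R}^m$, and set $\tilde A = A+E$, $\tilde b = b+\epsilon$. Assume the noiseless system $Ax=b$ is consistent and let $x_{\rm LS} = A^\dagger b$. Let $(x_k)_{k\ge0}$ be the iterates of the randomized Kaczmarz algorithm applied to the doubly-noisy system $\tilde A x\approx \tilde b$, with starting point $x_0$ satisfying $x_0 - x_{\rm LS} \in \operatorname{range}(\tilde A^\top)$. Then for every $k\ge 0$, $$\mathbb{E}\|x_k - x_{\rm LS}\|^2 \le \left(1-\frac{1}{\tilde R}\right)^k \|x_0 - x_{\rm LS}\|^2 + \frac{\|E x_{\rm LS} - \epsilon\|^2}{\sigma_{\min}^2(\tilde A)},$$ where $\tilde R = \|\tilde A^\dagger\|^2\,\|\tilde A\|_F^2$.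
   Context: Norms of vectors are Euclidean; $\|M\|$ is the spectral norm, $\|M\|_F$ the Frobenius norm, $M^\dagger$ the Moore–Penrose pseudoinverse, and $\sigma_{\min}(M)$ the smallest nonzero singular value of $M$. The randomized Kaczmarz (RK) algorithm applied to a system $\tilde A x\approx \tilde b$ (with $\tilde A$ having nonzero rows $\tilde a_1^\top,\dots,\tilde a_m^\top$) generates, from a starting point $x_0$, the iterates $x_{k+1} = x_k - \frac{\tilde a_{i(k)}^\top x_k - \tilde b_{i(k)}}{\|\tilde a_{i(k)}\|^2}\tilde a_{i(k)}$, where the indices $i(k)$ are drawn independently with $\Pr[i(k)=i] = \|\tilde a_i\|^2/\|\tilde A\|_F^2$. The expectation is over these random indices. The doubly-noisy system need not be consistent. *)

From HB Require Import structures.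
From mathcomp Require Import all_boot all_order all_algebra.
From mathcomp Require Import boolp classical_sets reals.
Set Implicit Arguments. Unset Strict Implicit. Unset Printing Implicit Defensive.
Import Order.TTheory GRing.Theory Num.Theory.
Local Open Scope ring_scope.
Local Open Scope classical_set_scope.

Section Defs.
Variable R : realType.

Definition vnorm2 {n} (x : 'cV[R]_n) : R := \sum_i x i 0 ^+ 2.
Definition vnorm {n} (x : 'cV[R]_n) : R := Num.sqrt (vnorm2 x).

Definition frob2 {m n} (M : 'M[R]_(m, n)) : R := \sum_i \sum_j M i j ^+ 2.

Definition opnorm {m n} (M : 'M[R]_(m, n)) : R :=
  sup [set vnorm (M *m x) | x in [set x : 'cV[R]_n | vnorm x = 1]].

Definition penrose {m n} (M : 'M[R]_(m, n)) (P : 'M[R]_(n, m)) : Prop :=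
  [/\ M *m P *m M = M, P *m M *m P = P,
      (M *m P)^T = M *m P & (P *m M)^T = P *m M].
Definition pinv {m n} (M : 'M[R]_(m, n)) : 'M[R]_(n, m) :=
  xget 0 [set P | penrose M P].

Definition sigma_min {m n} (M : 'M[R]_(m, n)) : R :=
  Num.sqrt (inf [set l : R | 0 < l /\ eigenvalue (M^T *m M) l]).

Definition rownorm2 {m n} (M : 'M[R]_(m, n)) (i : 'I_m) : R :=
  \sum_j M i j ^+ 2.

Definition rk_step {m n} (At : 'M[R]_(m, n)) (bt : 'cV[R]_m) (i : 'I_m)
    (x : 'cV[R]_n) : 'cV[R]_n :=
  x - (((row i At *m x) 0 0 - bt i 0) / rownorm2 At i) *: (row i At)^T.

Definition rk_iter {m n} (At : 'M[R]_(m, n)) (bt : 'cV[R]_m)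
    (x0 : 'cV[R]_n) (s : seq 'I_m) : 'cV[R]_n :=
  foldl (fun x i => rk_step At bt i x) x0 s.

Definition rk_prob {m n} (At : 'M[R]_(m, n)) (i : 'I_m) : R :=
  rownorm2 At i / frob2 At.

(* expectation of f(x_k) over the i.i.d. random indices i(0), ..., i(k-1) *)
Definition rk_expect {m n} (At : 'M[R]_(m, n)) (bt : 'cV[R]_m)
    (x0 : 'cV[R]_n) (k : nat) (f : 'cV[R]_n -> R) : R :=
  \sum_(s : k.-tuple 'I_m)
     (\prod_(i <- s) rk_prob At i) * f (rk_iter At bt x0 s).

End Defs.

From mathcomp Require Import all_boot all_order all_algebra.
From mathcomp Require Import boolp classical_sets reals.
From mathcomp Require Import ring lra.
Import Order.TTheory GRing.Theory Num.Theory.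
Set Implicit Arguments. Unset Strict Implicit. Unset Printing Implicit Defensive.
Local Open Scope ring_scope.

(* The error [e_k = x_k - x_LS] stays in the row space of [At]. A step is the
   orthogonal projection onto the hyperplane of the sampled row, displaced by
   the residual [r = bt - At x_LS = eps - E x_LS]; averaging the resulting
   Pythagorean identity over the rows gives
     E|e_(k+1)|^2 = |e_k|^2 - (|At e_k|^2 - |r|^2) / ||At||_F^2.
   On the row space |e| <= ||pinv At|| |At e|, so the error contracts by the
   factor [1 - 1 / (||pinv At||^2 ||At||_F^2)] up to [|r|^2 / ||At||_F^2],
   whose geometric sum is ||pinv At||^2 |r|^2 <= |r|^2 / sigma_min^2.
   The last inequality is the Rayleigh-quotient bound
   [sigma_min^2 |w|^2 <= |At w|^2] on the row space; the infimum of the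
   quotient is attained at an eigenvector of [At^T At], because a positive
   semidefinite form whose values on a unit sphere are not bounded away from
   0 has a kernel vector. *)

Section InnerProduct.
Variable R : realType.

Definition dot n (u v : 'cV[R]_n) : R := \sum_i u i 0 * v i 0.

Lemma dotE n (u v : 'cV[R]_n) : dot u v = (u^T *m v) 0 0.
Proof. by rewrite mxE; apply: eq_bigr => i _; rewrite mxE. Qed.

Lemma dotC n (u v : 'cV[R]_n) : dot u v = dot v u.
Proof. by apply: eq_bigr => i _; rewrite mulrC. Qed.

Lemma dotBl n (u v w : 'cV[R]_n) : dot (u - v) w = dot u w - dot v w.
Proof.
by rewrite /dot -sumrB; apply: eq_bigr => i _; rewrite !mxE mulrBl.
Qed.

Lemma dotBr n (u v w : 'cV[R]_n) : dot w (u - v) = dot w u - dot w v.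
Proof. by rewrite dotC dotBl !(dotC w). Qed.

Lemma dotZl n a (u w : 'cV[R]_n) : dot (a *: u) w = a * dot u w.
Proof. by rewrite /dot mulr_sumr; apply: eq_bigr => i _; rewrite mxE mulrA. Qed.

Lemma dotZr n a (u w : 'cV[R]_n) : dot w (a *: u) = a * dot w u.
Proof. by rewrite dotC dotZl dotC. Qed.

Lemma dot_mulmx m n (M : 'M[R]_(m, n)) u v : dot u (M *m v) = dot (M^T *m u) v.
Proof. by rewrite !dotE trmx_mul trmxK mulmxA. Qed.

Lemma vnorm2_dot n (u : 'cV[R]_n) : vnorm2 u = dot u u.
Proof. by apply: eq_bigr => i _; rewrite expr2. Qed.

Lemma vnorm2_ge0 n (u : 'cV[R]_n) : 0 <= vnorm2 u.
Proof. by apply: sumr_ge0 => i _; rewrite sqr_ge0. Qed.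

Lemma vnorm2_eq0 n (u : 'cV[R]_n) : (vnorm2 u == 0) = (u == 0).
Proof.
apply/idP/eqP => [|->]; last by rewrite /vnorm2 big1 // => i _; rewrite mxE expr0n.
rewrite psumr_eq0 => [/allP u0|i _]; last exact: sqr_ge0.
apply/matrixP => i j; rewrite ord1 mxE.
by apply/eqP; rewrite -sqrf_eq0; exact: u0 (mem_index_enum _).
Qed.

Lemma vnorm2_0 n : vnorm2 (0 : 'cV[R]_n) = 0.
Proof. by apply/eqP; rewrite vnorm2_eq0. Qed.

Lemma vnorm2_gt0 n (u : 'cV[R]_n) : (0 < vnorm2 u) = (u != 0).
Proof. by rewrite lt_neqAle vnorm2_ge0 andbT eq_sym vnorm2_eq0. Qed.

Lemma vnorm2Z n a (u : 'cV[R]_n) : vnorm2 (a *: u) = a ^+ 2 * vnorm2 u.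
Proof. by rewrite !vnorm2_dot dotZl dotZr mulrA expr2. Qed.

Lemma vnorm2N n (u : 'cV[R]_n) : vnorm2 (- u) = vnorm2 u.
Proof. by rewrite -scaleN1r vnorm2Z sqrrN expr1n mul1r. Qed.

Definition normalize n (u : 'cV[R]_n) := (Num.sqrt (vnorm2 u))^-1 *: u.

Lemma vnorm2_normalize n (u : 'cV[R]_n) : u != 0 -> vnorm2 (normalize u) = 1.
Proof.
rewrite -vnorm2_eq0 => u0.
by rewrite vnorm2Z exprVn sqr_sqrtr ?vnorm2_ge0 // mulVf.
Qed.

Lemma vnorm2_mulmx_normalize m n (M : 'M[R]_(m, n)) u :
  vnorm2 (M *m normalize u) = vnorm2 (M *m u) / vnorm2 u.
Proof. by rewrite -scalemxAr vnorm2Z exprVn sqr_sqrtr ?vnorm2_ge0 // mulrC. Qed.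

Lemma vnorm_eq1 n (u : 'cV[R]_n) : (vnorm u == 1) = (vnorm2 u == 1).
Proof. by rewrite /vnorm -[X in _ == X]sqrtr1 eqr_sqrt ?vnorm2_ge0. Qed.

Lemma dot_sqr_le n (u v : 'cV[R]_n) : dot u v ^+ 2 <= vnorm2 u * vnorm2 v.
Proof.
have [->|v0] := eqVneq v 0.
  by rewrite /dot big1 ?expr0n ?mulr_ge0 ?vnorm2_ge0 // => i _; rewrite mxE mulr0.
have vp : 0 < vnorm2 v by rewrite vnorm2_gt0.
have := vnorm2_ge0 (u - (dot u v / vnorm2 v) *: v).
rewrite vnorm2_dot dotBl !dotBr !dotZl !dotZr -!vnorm2_dot (dotC v u).
set d := dot u v; set a := vnorm2 u; set b := vnorm2 v.
have -> : a - d / b * d - (d / b * d - d / b * (d / b * b)) = (a * b - d ^+ 2) / b.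
  by field; rewrite gt_eqF.
by rewrite pmulr_lge0 ?invr_gt0 // subr_ge0.
Qed.

Lemma mulmx_col_dot m n (M : 'M[R]_(m, n)) x i : (M *m x) i 0 = dot (row i M)^T x.
Proof. by rewrite mxE; apply: eq_bigr => j _; rewrite !mxE. Qed.

Lemma rownorm2E m n (M : 'M[R]_(m, n)) i : rownorm2 M i = vnorm2 (row i M)^T.
Proof. by apply: eq_bigr => j _; rewrite !mxE. Qed.

Lemma vnorm2_mulmx_le m n (M : 'M[R]_(m, n)) x :
  vnorm2 (M *m x) <= frob2 M * vnorm2 x.
Proof.
rewrite /vnorm2 /frob2 mulr_suml; apply: ler_sum => i _.
rewrite mulmx_col_dot; apply: le_trans (dot_sqr_le _ _) _.
by rewrite -rownorm2E.
Qed.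

Lemma rownorm2_ge0 m n (M : 'M[R]_(m, n)) i : 0 <= rownorm2 M i.
Proof. by apply: sumr_ge0 => j _; exact: sqr_ge0. Qed.

Lemma frob2_ge0 m n (M : 'M[R]_(m, n)) : 0 <= frob2 M.
Proof. by apply: sumr_ge0 => i _; exact: rownorm2_ge0. Qed.

End InnerProduct.

Section Pseudoinverse.
Variable R : realType.

Lemma gram_unitmx r n (F : 'M[R]_(r, n)) : row_free F -> F *m F^T \in unitmx.
Proof.
move=> freeF; rewrite -row_free_unit; apply: inj_row_free => x xFF0.
have : vnorm2 (x *m F)^T == 0.
  by rewrite vnorm2_dot dotE trmxK trmx_mul mulmxA -(mulmxA x) xFF0 mul0mx mxE.
by rewrite vnorm2_eq0 trmx_eq0 mulmx_free_eq0 // => /eqP.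
Qed.

(* Full-rank factorization M = C F gives the Penrose inverse
   F^T (F F^T)^-1 (C^T C)^-1 C^T. *)
Lemma penrose_exists m n (M : 'M[R]_(m, n)) : exists P, penrose M P.
Proof.
set C := col_base M; set F := row_base M.
have eM : C *m F = M by exact: mulmx_base.
have freeF : row_free F by exact: row_base_free.
have freeCT : row_free C^T.
  by rewrite /row_free mxrank_tr; exact: col_base_full.
clearbody C F; rewrite -eM.
set G1 := F *m F^T; set G2 := C^T *m C.
have uG1 : G1 \in unitmx by exact: gram_unitmx.
have uG2 : G2 \in unitmx by have := gram_unitmx freeCT; rewrite trmxK.
have symG1 : G1^T = G1 by rewrite /G1 trmx_mul trmxK.
have symG2 : G2^T = G2 by rewrite /G2 trmx_mul trmxK.
exists (F^T *m invmx G1 *m invmx G2 *m C^T).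
have MP : C *m F *m (F^T *m invmx G1 *m invmx G2 *m C^T) = C *m invmx G2 *m C^T.
  by rewrite !mulmxA -(mulmxA C) -/G1 -(mulmxA C G1) mulmxV // mulmx1.
have PM : F^T *m invmx G1 *m invmx G2 *m C^T *m (C *m F) = F^T *m invmx G1 *m F.
  by rewrite !mulmxA -(mulmxA _ C^T) -/G2 -(mulmxA _ (invmx G2)) mulVmx // mulmx1.
split.
- by rewrite MP !mulmxA -(mulmxA _ C^T) -/G2 -(mulmxA _ (invmx G2)) mulVmx ?mulmx1.
- by rewrite PM !mulmxA -(mulmxA _ F) -/G1 -(mulmxA _ G1) mulmxV ?mulmx1.
- by rewrite MP !trmx_mul trmxK trmx_inv symG2 mulmxA.
- by rewrite PM !trmx_mul trmxK trmx_inv symG1 mulmxA.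
Qed.

Lemma pinvP m n (M : 'M[R]_(m, n)) : penrose M (pinv M).
Proof. exact: xgetPex (penrose_exists M). Qed.

Lemma pinv_rowspace m n (M : 'M[R]_(m, n)) (y : 'cV[R]_m) : ((pinv M *m y)^T <= M)%MS.
Proof.
have [_ PMP _ symPM] := pinvP M.
by rewrite -PMP -symPM !trmx_mul !trmxK !mulmxA submxMl.
Qed.

Lemma pinv_mulmxK m n (M : 'M[R]_(m, n)) (e : 'cV[R]_n) :
  (e^T <= M)%MS -> pinv M *m (M *m e) = e.
Proof.
have [MPM _ _ symPM] := pinvP M.
move=> /submxP[D eD]; have -> : e = M^T *m D^T by rewrite -trmx_mul -eD trmxK.
by rewrite !mulmxA -symPM -trmx_mul mulmxA MPM.
Qed.

Lemma vnorm2_mulmx_pinv_le m n (M : 'M[R]_(m, n)) y :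
  vnorm2 (M *m (pinv M *m y)) <= vnorm2 y.
Proof.
have [MPM _ symMP _] := pinvP M.
set Q := M *m pinv M.
have QQ : Q *m Q = Q by rewrite /Q mulmxA MPM.
have QyE : vnorm2 (Q *m y) = dot y (Q *m y).
  by rewrite vnorm2_dot dot_mulmx dotC symMP mulmxA QQ.
have := vnorm2_ge0 (y - Q *m y).
rewrite vnorm2_dot dotBl !dotBr -!vnorm2_dot (dotC (Q *m y) y) -QyE mulmxA.
lra.
Qed.

End Pseudoinverse.

Section OperatorNorm.
Variables (R : realType) (m n : nat) (M : 'M[R]_(m, n)).
Local Open Scope classical_set_scope.

Let gains := [set vnorm (M *m x) | x in [set x : 'cV[R]_n | vnorm x = 1]].

Lemma opnorm_has_ubound : has_ubound gains.
Proof.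
exists (Num.sqrt (frob2 M)) => _ [x /eqP x1 <-]; rewrite vnorm_eq1 in x1.
by rewrite ler_sqrt ?frob2_ge0 // -[leRHS]mulr1 -(eqP x1) vnorm2_mulmx_le.
Qed.

Lemma opnorm_ge0 : 0 <= opnorm M.
Proof.
have [[y gy]|] := pselect (gains !=set0).
  apply: le_trans (ub_le_sup opnorm_has_ubound gy).
  by case: gy => x _ <-; exact: sqrtr_ge0.
by move=> /nonemptyPn gains0; rewrite /opnorm -/gains gains0 sup0.
Qed.

Lemma vnorm2_mulmx_le_opnorm x : vnorm2 (M *m x) <= opnorm M ^+ 2 * vnorm2 x.
Proof.
have [->|x0] := eqVneq x 0; first by rewrite mulmx0 !vnorm2_0 mulr0.
have : vnorm (M *m normalize x) <= opnorm M.
  apply: (ub_le_sup opnorm_has_ubound); exists (normalize x) => //.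
  by apply/eqP; rewrite vnorm_eq1 vnorm2_normalize.
rewrite /vnorm vnorm2_mulmx_normalize => le_o.
have := lerXn2r 2 (sqrtr_ge0 _) opnorm_ge0 le_o.
by rewrite sqr_sqrtr ?divr_ge0 ?vnorm2_ge0 // ler_pdivrMr ?vnorm2_gt0.
Qed.

Lemma opnorm_le c : 0 <= c ->
  (forall x, vnorm2 (M *m x) <= c ^+ 2 * vnorm2 x) -> opnorm M <= c.
Proof.
move=> c0 bound; have [gains0|gains0] := pselect (gains !=set0); last first.
  by move/nonemptyPn: gains0; rewrite /opnorm -/gains => ->; rewrite sup0.
apply: ge_sup gains0 _ => _ [x /eqP x1 <-]; rewrite vnorm_eq1 in x1.
rewrite /vnorm -[c]ger0_norm // -sqrtr_sqr ler_sqrt ?sqr_ge0 //.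
by rewrite -[leRHS]mulr1 -(eqP x1).
Qed.

End OperatorNorm.

Lemma rowspaceBZ (R : fieldType) p n (U : 'M[R]_(p, n)) (u v : 'cV[R]_n) a :
  (u^T <= U)%MS -> (v^T <= U)%MS -> ((u - a *: v)^T <= U)%MS.
Proof.
move=> uU vU; rewrite linearB linearZ /= addmx_sub //.
by rewrite -scaleN1r !scalemx_sub.
Qed.

Section PsdKernel.
Variables (R : realType) (p n : nat) (U : 'M[R]_(p, n)) (T : 'M[R]_n).
Implicit Types (v w : 'cV[R]_n).

Lemma dot_mulmx_le v : dot v (T *m v) <= (1 + frob2 T) * vnorm2 v.
Proof.
have := vnorm2_ge0 (v - T *m v).
rewrite vnorm2_dot dotBl !dotBr -!vnorm2_dot (dotC (T *m v) v).
have := vnorm2_mulmx_le T v; have := vnorm2_ge0 v; have := frob2_ge0 T.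
nra.
Qed.

Lemma injective_on_lbound :
    (forall w, (w^T <= U)%MS -> T *m w = 0 -> w = 0) ->
  exists2 K, 0 <= K & forall w, (w^T <= U)%MS -> vnorm2 w <= K * vnorm2 (T *m w).
Proof.
move=> injT; set B := row_base U.
have BU : (B :=: U)%MS by exact: eq_row_base.
have freeB : row_free B by exact: row_base_free.
clearbody B.
have freeBT : row_free (B *m T^T).
  apply: inj_row_free => x xBT0.
  have xBU : ((x *m B)^T^T <= U)%MS by rewrite trmxK -BU submxMl.
  have : (x *m B)^T = 0.
    by apply: injT xBU _; rewrite -[T]trmxK -trmx_mul -mulmxA xBT0 trmx0.
  by move/eqP; rewrite trmx_eq0 mulmx_free_eq0 // => /eqP.
have [Y BTY1] := row_freeP freeBT.
exists (frob2 (Y *m B)^T); first exact: frob2_ge0.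
move=> w; rewrite -BU => /submxP[z wE].
have {1}-> : w = (Y *m B)^T *m (T *m w).
  apply: trmx_inj; rewrite trmx_mul trmxK trmx_mul wE !mulmxA.
  by rewrite -(mulmxA z) -(mulmxA z) BTY1 mulmx1.
exact: vnorm2_mulmx_le.
Qed.

Hypotheses (symT : T^T = T)
  (stableT : forall w, (w^T <= U)%MS -> ((T *m w)^T <= U)%MS)
  (psdT : forall w, (w^T <= U)%MS -> 0 <= dot w (T *m w)).

(* Positivity of the form at [w - t T w], with [t = 1 / (1 + frob2 T)]. *)
Lemma vnorm2_mulmx_psd_le w : (w^T <= U)%MS ->
  vnorm2 (T *m w) <= (1 + frob2 T) * dot w (T *m w).
Proof.
move=> wU; set c := 1 + frob2 T; set v := T *m w.
have c_gt0 : 0 < c by rewrite ltr_wpDr ?frob2_ge0.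
have := psdT (rowspaceBZ c^-1 wU (stableT wU)).
rewrite mulmxBr -scalemxAr dotBl !dotBr !dotZl !dotZr -/v.
rewrite [dot w (T *m v)]dot_mulmx symT -/v -vnorm2_dot.
have := dot_mulmx_le v; rewrite -/c.
set a := dot w v; set b := dot v (T *m v); set q := vnorm2 v => bq.
have cinv : c^-1 * c = 1 by rewrite mulVf ?gt_eqF.
have ci0 : 0 <= c^-1 by rewrite invr_ge0 ltW.
have := ler_wpM2l ci0 (ler_wpM2l ci0 bq).
rewrite (mulrA c^-1 c) cinv mul1r => tb_le psd_u.
have : c^-1 * q <= a by lra.
move=> /(ler_wpM2l (ltW c_gt0)); rewrite mulrA mulfV ?mul1r //.
exact: lt0r_neq0.
Qed.

(* Otherwise T is injective on [U], and the two bounds above keep the form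
   above [1 / (K (1 + frob2 T) + 1)] on the unit sphere of [U]. *)
Lemma psd_kernel_exists :
    (forall d, 0 < d -> exists2 w, (w^T <= U)%MS /\ vnorm2 w = 1 & dot w (T *m w) < d) ->
  exists w, [/\ (w^T <= U)%MS, w != 0 & T *m w = 0].
Proof.
move=> small; apply: contrapT => noker.
have [K K0 lbK] : exists2 K, 0 <= K &
    forall w, (w^T <= U)%MS -> vnorm2 w <= K * vnorm2 (T *m w).
  apply: injective_on_lbound => w wU Tw0; apply: contrapT => /eqP w0.
  by apply: noker; exists w.
set c := 1 + frob2 T.
have Kc0 : 0 <= K * c by rewrite mulr_ge0 // addr_ge0 ?frob2_ge0.
have [|w [wU w1] dw] := small (K * c + 1)^-1; first by rewrite invr_gt0 ltr_wpDl.
have : 1 <= K * c * dot w (T *m w).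
  rewrite -w1 -mulrA; apply: le_trans (lbK w wU) _.
  exact: ler_wpM2l (vnorm2_mulmx_psd_le wU).
have : K * c * dot w (T *m w) <= K * c * (K * c + 1)^-1.
  exact: ler_wpM2l (ltW dw).
have : K * c * (K * c + 1)^-1 < 1.
  by rewrite ltr_pdivrMr ?ltr_wpDl // mul1r ltrDl.
lra.
Qed.

End PsdKernel.

Section SmallestSingularValue.
Variables (R : realType) (m n : nat) (M : 'M[R]_(m, n)).
Implicit Types (w : 'cV[R]_n).
Local Open Scope classical_set_scope.

Lemma trmx_mul_rowspace (z : 'cV[R]_m) : ((M^T *m z)^T <= M)%MS.
Proof. by rewrite trmx_mul trmxK submxMl. Qed.

Let rayleigh_values :=
  [set vnorm2 (M *m w) | w in [set w | (w^T <= M)%MS /\ vnorm2 w = 1]].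

Definition rayleigh_min := inf rayleigh_values.

Let rayleigh_lbound : has_lbound rayleigh_values.
Proof. by exists 0 => _ [w _ <-]; exact: vnorm2_ge0. Qed.

Lemma rayleigh_min_le w : (w^T <= M)%MS ->
  rayleigh_min * vnorm2 w <= vnorm2 (M *m w).
Proof.
move=> wM; have [->|w0] := eqVneq w 0; first by rewrite mulmx0 !vnorm2_0 mulr0.
have : rayleigh_min <= vnorm2 (M *m normalize w).
  apply: (ge_inf rayleigh_lbound); exists (normalize w) => //.
  by split; [rewrite linearZ scalemx_sub|exact: vnorm2_normalize].
by rewrite vnorm2_mulmx_normalize ler_pdivlMr ?vnorm2_gt0.
Qed.

Hypothesis M0 : M != 0.

Let rayleigh_nonempty : rayleigh_values !=set0.
Proof.
have [v vM v0] := rowV0Pn M0.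
exists (vnorm2 (M *m normalize v^T)); exists (normalize v^T) => //.
by split; [rewrite linearZ /= trmxK scalemx_sub|rewrite vnorm2_normalize ?trmx_eq0].
Qed.

Lemma rayleigh_min_ge0 : 0 <= rayleigh_min.
Proof. by apply: lb_le_inf rayleigh_nonempty _ => _ [w _ <-]; exact: vnorm2_ge0. Qed.

(* [M^T M - rayleigh_min] is positive semidefinite on the row space and its
   form takes arbitrarily small values there, so it has a kernel vector. *)
Lemma rayleigh_min_eigenvector :
  exists w, [/\ (w^T <= M)%MS, w != 0 & M^T *m M *m w = rayleigh_min *: w].
Proof.
set mu := rayleigh_min; set T := M^T *m M - mu%:M.
have formT w : dot w (T *m w) = vnorm2 (M *m w) - mu * vnorm2 w.
  by rewrite mulmxBl mul_scalar_mx dotBr dotZr -mulmxA dot_mulmx trmxK dotC -!vnorm2_dot.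
have symT : T^T = T by rewrite linearB /= tr_scalar_mx trmx_mul trmxK.
have stableT w : (w^T <= M)%MS -> ((T *m w)^T <= M)%MS.
  by move=> wM; rewrite mulmxBl mul_scalar_mx -mulmxA rowspaceBZ ?trmx_mul_rowspace.
have psdT w : (w^T <= M)%MS -> 0 <= dot w (T *m w).
  by move=> wM; rewrite formT subr_ge0 rayleigh_min_le.
have [|w [wM w0 Tw0]] := psd_kernel_exists symT stableT psdT.
  move=> d d0.
  have [_ [w [wM w1] <-] small] :=
    inf_adherent d0 (conj rayleigh_nonempty rayleigh_lbound).
  by exists w => //; rewrite formT w1 mulr1 ltrBlDl.
exists w; split => //.
by move/eqP: Tw0; rewrite mulmxBl mul_scalar_mx subr_eq0 => /eqP.
Qed.

Lemma rayleigh_min_gt0 : 0 < rayleigh_min.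
Proof.
have [w [wM w0 eigw]] := rayleigh_min_eigenvector.
rewrite lt_neqAle rayleigh_min_ge0 andbT; apply: contraNneq w0 => mu0.
have : vnorm2 (M *m w) == 0.
  by rewrite vnorm2_dot dot_mulmx mulmxA eigw dotZl -mu0 mul0r.
by rewrite vnorm2_eq0 => /eqP Mw0; rewrite -(pinv_mulmxK wM) Mw0 mulmx0.
Qed.

Lemma sigma_min_sqr : sigma_min M ^+ 2 = rayleigh_min.
Proof.
set mu := rayleigh_min; set S := M^T *m M.
have symS : S^T = S by rewrite /S trmx_mul trmxK.
have mu_eigen : eigenvalue S mu.
  have [w [_ w0 eigw]] := rayleigh_min_eigenvector.
  apply/eigenvalueP; exists w^T; last by rewrite trmx_eq0.
  by rewrite -symS -trmx_mul eigw linearZ.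
have mu_min l : 0 < l -> eigenvalue S l -> mu <= l.
  move=> l0 /eigenvalueP[v vS v0]; set u := v^T.
  have Su : S *m u = l *: u by rewrite /u -symS -trmx_mul vS linearZ.
  have uM : (u^T <= M)%MS.
    have -> : u = M^T *m (l^-1 *: (M *m u)).
      by rewrite -scalemxAr mulmxA -/S Su scalerA mulVf ?lt0r_neq0 ?scale1r.
    exact: trmx_mul_rowspace.
  have := rayleigh_min_le uM.
  rewrite [vnorm2 (M *m u)]vnorm2_dot dot_mulmx mulmxA -/S Su dotZl -vnorm2_dot.
  by rewrite ler_pM2r // vnorm2_gt0 trmx_eq0.
rewrite /sigma_min -/S.
have -> : inf [set l | 0 < l /\ eigenvalue S l] = mu.
  apply/eqP; rewrite eq_le; apply/andP; split.
    by apply: ge_inf; [exists 0 => l [/ltW]|split=> //; exact: rayleigh_min_gt0].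
  apply: lb_le_inf => [|l [l_gt0 eig_l]]; last exact: mu_min.
  by exists mu; split=> //; exact: rayleigh_min_gt0.
by rewrite sqr_sqrtr ?rayleigh_min_ge0.
Qed.

Lemma sigma_min_gt0 : 0 < sigma_min M.
Proof.
have := rayleigh_min_gt0; rewrite -sigma_min_sqr exprn_even_gt0 //= => s0.
by rewrite lt_def s0; exact: sqrtr_ge0.
Qed.

Lemma sigma_min_rowspace w : (w^T <= M)%MS ->
  sigma_min M ^+ 2 * vnorm2 w <= vnorm2 (M *m w).
Proof. by rewrite sigma_min_sqr; exact: rayleigh_min_le. Qed.

End SmallestSingularValue.

Section PseudoinverseNorm.
Variables (R : realType) (m n : nat) (M : 'M[R]_(m, n)).

Lemma vnorm2_rowspace_le e : (e^T <= M)%MS ->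
  vnorm2 e <= opnorm (pinv M) ^+ 2 * vnorm2 (M *m e).
Proof. by move=> eM; rewrite -{1}(pinv_mulmxK eM) vnorm2_mulmx_le_opnorm. Qed.

Lemma opnorm_pinv_le : M != 0 -> opnorm (pinv M) <= (sigma_min M)^-1.
Proof.
move=> M0; have s_gt0 := sigma_min_gt0 M0.
apply: opnorm_le => [|y]; first by rewrite invr_ge0 ltW.
rewrite exprVn ler_pdivlMl ?exprn_gt0 //.
exact: le_trans (sigma_min_rowspace M0 (pinv_rowspace M y)) (vnorm2_mulmx_pinv_le M y).
Qed.

Lemma opnorm_pinv_frob2_ge1 i : row i M != 0 -> 1 <= opnorm (pinv M) ^+ 2 * frob2 M.
Proof.
move=> row_i0; set a := (row i M)^T.
have aM : (a^T <= M)%MS by rewrite trmxK row_sub.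
have a_gt0 : 0 < vnorm2 a by rewrite vnorm2_gt0 trmx_eq0.
have := le_trans (vnorm2_rowspace_le aM) (ler_wpM2l (sqr_ge0 _) (vnorm2_mulmx_le M a)).
by rewrite mulrA -{1}[vnorm2 a]mul1r ler_pM2r.
Qed.

End PseudoinverseNorm.

Lemma big_tuple_cons (V : nmodType) (T : finType) k (F : k.+1.-tuple T -> V) :
  \sum_(s : k.+1.-tuple T) F s = \sum_i \sum_(t : k.-tuple T) F [tuple of i :: t].
Proof.
rewrite pair_bigA /= (reindex (fun p : T * k.-tuple T => [tuple of p.1 :: p.2])) //=.
exists (fun s : k.+1.-tuple T => (thead s, [tuple of behead s])).
  by move=> [i t] _ /=; rewrite theadE; congr pair; apply: val_inj.
by move=> s _ /=; rewrite [RHS]tuple_eta.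
Qed.

Section RandomizedKaczmarz.
Variables (R : realType) (m n : nat) (At : 'M[R]_(m, n)) (bt : 'cV[R]_m).
Implicit Types (x xs : 'cV[R]_n) (f g h : 'cV[R]_n -> R).

Lemma rk_prob_ge0 i : 0 <= rk_prob At i.
Proof. by rewrite divr_ge0 ?rownorm2_ge0 ?frob2_ge0. Qed.

Lemma rk_expect0 x0 f : rk_expect At bt x0 0 f = f x0.
Proof.
rewrite /rk_expect (big_pred1 [tuple]) => [|s]; last by apply/esym/eqP; exact: tuple0.
by rewrite big_nil mul1r.
Qed.

Lemma rk_expectS x0 k f : rk_expect At bt x0 k.+1 f =
  \sum_i rk_prob At i * rk_expect At bt (rk_step At bt i x0) k f.
Proof.
rewrite /rk_expect big_tuple_cons; apply: eq_bigr => i _.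
by rewrite mulr_sumr; apply: eq_bigr => t _; rewrite big_cons mulrA.
Qed.

Lemma rk_expectSr k x0 f : rk_expect At bt x0 k.+1 f =
  rk_expect At bt x0 k (fun x => \sum_i rk_prob At i * f (rk_step At bt i x)).
Proof.
elim: k x0 => [|k IHk] x0.
  by rewrite rk_expectS rk_expect0; under eq_bigr do rewrite rk_expect0.
by rewrite rk_expectS [RHS]rk_expectS; under eq_bigr do rewrite IHk.
Qed.

Lemma ler_rk_expect x0 k g h :
    (forall s : k.-tuple 'I_m, g (rk_iter At bt x0 s) <= h (rk_iter At bt x0 s)) ->
  rk_expect At bt x0 k g <= rk_expect At bt x0 k h.
Proof.
move=> gh; apply: ler_sum => s _; apply: ler_wpM2l; last exact: gh.
by apply: prodr_ge0 => i _; exact: rk_prob_ge0.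
Qed.

Lemma rk_expect_affine x0 k f a c :
  rk_expect At bt x0 k (fun x => a * f x + c) =
  a * rk_expect At bt x0 k f + c * rk_expect At bt x0 k (fun _ => 1).
Proof.
rewrite /rk_expect !mulr_sumr -big_split; apply: eq_bigr => s _ /=.
by rewrite mulrDr mulr1 mulrCA (mulrC c).
Qed.

Lemma rk_iter_rowspace xs s x : ((x - xs)^T <= At)%MS ->
  ((rk_iter At bt x s - xs)^T <= At)%MS.
Proof.
elim: s x => [|i s IHs] x x_xs //=; apply: IHs.
by rewrite /rk_step addrAC rowspaceBZ // trmxK row_sub.
Qed.

Hypotheses (m_gt0 : (0 < m)%N) (rows_neq0 : forall i, row i At != 0).

Let rownorm2_gt0 i : 0 < rownorm2 At i.
Proof. by rewrite rownorm2E vnorm2_gt0 trmx_eq0. Qed.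

Let frob2_gt0 : 0 < frob2 At.
Proof.
rewrite /frob2 (bigD1 (Ordinal m_gt0)) //= ltr_wpDr ?rownorm2_gt0 //.
by rewrite sumr_ge0 // => i _; exact: rownorm2_ge0.
Qed.

Lemma rk_expect1 x0 k : rk_expect At bt x0 k (fun _ => 1) = 1.
Proof.
have sum_prob : \sum_i rk_prob At i = 1.
  by rewrite -mulr_suml mulfV // lt0r_neq0.
elim: k x0 => [|k IHk] x0; first by rewrite rk_expect0.
by rewrite rk_expectSr -[RHS](IHk x0); under eq_bigr do rewrite mulr1; rewrite sum_prob.
Qed.

(* The step is the orthogonal projection of [x] onto the hyperplane of row [i]
   shifted by the residual of [xs]; hence this Pythagorean identity. *)
Lemma vnorm2_rk_step xs x i :
  vnorm2 (rk_step At bt i x - xs) = vnorm2 (x - xs)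
    + ((bt - At *m xs) i 0 ^+ 2 - (At *m (x - xs)) i 0 ^+ 2) / rownorm2 At i.
Proof.
set e := x - xs; set a := (row i At)^T; set r := (bt - At *m xs) i 0.
have -> : rk_step At bt i x - xs = e - (((At *m e) i 0 - r) / rownorm2 At i) *: a.
  rewrite /rk_step /e addrAC; congr (_ - _ *: _); congr (_ / _).
  by rewrite /r -row_mul mxE mulmxBr !mxE; ring.
clearbody e; rewrite vnorm2_dot dotBl !dotBr !dotZl !dotZr -!vnorm2_dot (dotC e a).
rewrite /a -mulmx_col_dot -rownorm2E.
set d := (At *m e) i 0; set nn := rownorm2 At i.
by field; exact: lt0r_neq0 (rownorm2_gt0 i).
Qed.

Lemma rk_step_mean_sqerr xs x :
  \sum_i rk_prob At i * vnorm2 (rk_step At bt i x - xs) =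
  vnorm2 (x - xs) - vnorm2 (At *m (x - xs)) / frob2 At
  + vnorm2 (bt - At *m xs) / frob2 At.
Proof.
under eq_bigr => i _ do rewrite vnorm2_rk_step /rk_prob mulrDr [_ / _ * (_ / _)]mulrC
  mulrA divfK ?lt0r_neq0 // mulrBl.
rewrite big_split sumrB /= -mulr_suml -!mulr_suml.
change (\sum_i rownorm2 At i) with (frob2 At); rewrite mulfV ?lt0r_neq0 // mul1r.
by rewrite /vnorm2; lra.
Qed.

Lemma rk_step_mean_sqerr_le xs x K : 1 <= K * frob2 At ->
    vnorm2 (x - xs) <= K * vnorm2 (At *m (x - xs)) ->
  \sum_i rk_prob At i * vnorm2 (rk_step At bt i x - xs) <=
  (1 - (K * frob2 At)^-1) * vnorm2 (x - xs) + vnorm2 (bt - At *m xs) / frob2 At.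
Proof.
move=> KF_ge1 lbK; rewrite rk_step_mean_sqerr lerD2r mulrBl mul1r lerD2l lerN2.
have K_gt0 : 0 < K by rewrite -(pmulr_lgt0 _ frob2_gt0) (lt_le_trans ltr01).
by rewrite invfM mulrAC ler_pM2r ?invr_gt0 // ler_pdivrMl.
Qed.

Lemma rk_expect_sqerr_le xs x0 K k : 1 <= K * frob2 At ->
    (forall e, (e^T <= At)%MS -> vnorm2 e <= K * vnorm2 (At *m e)) ->
    ((x0 - xs)^T <= At)%MS ->
  rk_expect At bt x0 k (fun x => vnorm2 (x - xs)) <=
  (1 - (K * frob2 At)^-1) ^+ k * vnorm2 (x0 - xs) + K * vnorm2 (bt - At *m xs).
Proof.
move=> KF_ge1 lbK x0_xs; set q := 1 - _; set r2 := vnorm2 (bt - At *m xs).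
have K_gt0 : 0 < K by rewrite -(pmulr_lgt0 _ frob2_gt0) (lt_le_trans ltr01).
have q_ge0 : 0 <= q by rewrite subr_ge0 invf_le1 // (lt_le_trans ltr01).
have fixpoint : q * (K * r2) + r2 / frob2 At = K * r2.
  by rewrite /q; field; rewrite !lt0r_neq0.
elim: k => [|k IHk].
  by rewrite rk_expect0 expr0 mul1r lerDl mulr_ge0 ?vnorm2_ge0 ?ltW.
rewrite rk_expectSr.
apply: le_trans (ler_rk_expect (h := fun x => q * vnorm2 (x - xs) + r2 / frob2 At) _) _.
  by move=> s; apply: rk_step_mean_sqerr_le KF_ge1 (lbK _ (rk_iter_rowspace s x0_xs)).
rewrite rk_expect_affine rk_expect1 mulr1 -fixpoint addrA lerD2r exprS -mulrA -mulrDr.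
exact: ler_wpM2l.
Qed.

End RandomizedKaczmarz.

Unset Implicit Arguments.
Theorem theorem3p1 (R : realType) (m n : nat)
    (A E : 'M[R]_(m, n)) (b eps : 'cV[R]_m) (x0 : 'cV[R]_n)
    (hrows : forall i : 'I_m, row i (A + E) != 0)
    (hcons : exists x : 'cV[R]_n, A *m x = b)
    (hx0 : ((x0 - pinv A *m b)^T <= (A + E)%R)%MS)
    (k : nat) :
  let At := A + E in
  let bt := b + eps in
  let xLS := pinv A *m b in
  rk_expect At bt x0 k (fun x => vnorm2 (x - xLS))
  <= (1 - (opnorm (pinv At) ^+ 2 * frob2 At)^-1) ^+ k * vnorm2 (x0 - xLS)
     + vnorm2 (E *m xLS - eps) / sigma_min At ^+ 2.
Proof.
cbv zeta; set At := A + E in hrows hx0 *; set bt := b + eps.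
set xLS := pinv A *m b in hx0 *.
have noise_ge0 : 0 <= vnorm2 (E *m xLS - eps) / sigma_min At ^+ 2.
  by rewrite divr_ge0 ?vnorm2_ge0 ?sqr_ge0.
have [m0|m_gt0] := posnP m.
  subst m; have -> : frob2 At = 0 by rewrite /frob2 big_ord0.
  rewrite mulr0 invr0 subr0 expr1n mul1r; case: k => [|k].
    by rewrite rk_expect0 lerDl.
  rewrite /rk_expect big1 ?addr_ge0 ?vnorm2_ge0 // => s _.
  by case: (thead s).
have At0 : At != 0 by apply: contraNneq (hrows (Ordinal m_gt0)) => ->; rewrite row0.
have AxLS : A *m xLS = b.
  have [x Ax] := hcons; have [APA _ _ _] := pinvP A.
  by rewrite /xLS -Ax !mulmxA APA.
have residual : vnorm2 (bt - At *m xLS) = vnorm2 (E *m xLS - eps).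
  rewrite -vnorm2N /bt /At mulmxDl AxLS; congr vnorm2.
  by apply/matrixP => i j; rewrite !mxE; ring.
have KF_ge1 := opnorm_pinv_frob2_ge1 (hrows (Ordinal m_gt0)).
apply: le_trans (rk_expect_sqerr_le bt m_gt0 hrows k KF_ge1
  (@vnorm2_rowspace_le _ _ _ At) hx0) _.
rewrite lerD2l -residual mulrC ler_wpM2l ?vnorm2_ge0 // -exprVn.
by rewrite lerXn2r ?nnegrE ?opnorm_ge0 ?invr_ge0 ?sqrtr_ge0 // (opnorm_pinv_le At0).
Qed.
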